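(* Let $Q$ be a quantity space over a field $K$ with a basis $E=\{e_1,\ldots,e_n\}$. Then $\mathsf{E}=\{[e_1],\ldots,[e_n]\}$ is a basis for the abelian group $Q/{\sim}$, and $\mathsf{E}$ has the same cardinality as $E$.
   Context: A scalable monoid over a (unital, associative) ring $R$ is a monoid $X$ (identity $1_X$, product written $xy$) together with a map $R\times X\to X$, $(\alpha,x)\mapsto\alpha\cdot x$, such that $1\cdot x=x$, $\alpha\cdot(\beta\cdot x)=\alpha\beta\cdot x$ and $\alpha\cdot(xy)=(\alpha\cdot x)y=x(\alpha\cdot y)$. A quantity space over a field $K$ is a commutative scalable monoid $Q$ over $K$ for which there exists a finite set $\{e_1,\ldots,e_n\}$ of invertible elements of $Q$ (a basis) such that every $x\in Q$ has a unique expansion $x=\mu\cdot\prod_{i=1}^n e_i^{k_i}$ with $\mu\in K$, $k_i\in\mathbb{Z}$. On $Q$, $x\sim y$ means $\alpha\cdot x=\beta\cdot y$ for some $\alpha,\beta\in K$; $[x]$ is the equivalence class of $x$, and $Q/{\sim}$ is the set of classes with $[x][y]=[xy]$, which is an abelian group. A basis of a finitely generated abelian group $G$ is a set $\{\varepsilon_1,\ldots,\varepsilon_n\}\subseteq G$ such that every $g\in G$ has a unique expansion $g=\prod_{i=1}^n\varepsilon_i^{k_i}$ with $k_i\in\mathbb{Z}$. *)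

From HB Require Import structures.
From mathcomp Require Import all_boot all_order all_algebra.
From Stdlib Require Import ClassicalEpsilon.
Set Implicit Arguments. Unset Strict Implicit. Unset Printing Implicit Defensive.
Import GRing.Theory.
Local Open Scope ring_scope.

Section Generic.
Variables (M : Type) (mul : M -> M -> M) (one : M).

Definition invertible (x : M) : Prop :=
  exists y, mul x y = one /\ mul y x = one.

Definition minv (x : M) : M :=
  epsilon (inhabits x) (fun y => mul x y = one /\ mul y x = one).

Definition zpow (x : M) (k : int) : M :=
  match k with
  | Posz m => iter m (mul x) one
  | Negz m => iter m.+1 (mul (minv x)) one
  end.

Definition zprod (n : nat) (x : 'I_n -> M) (k : 'I_n -> int) : M :=
  \big[mul/one]_(i < n) zpow (x i) (k i).

Definition group_basis (n : nat) (eps : 'I_n -> M) : Prop :=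
  forall g : M, exists! k : 'I_n -> int, g = zprod eps k.
End Generic.

Section Quantity.
Variables (K : fieldType) (Q : Type) (mul : Q -> Q -> Q) (one : Q)
          (scale : K -> Q -> Q).

Definition scalable_monoid : Prop :=
  (forall x y z, mul x (mul y z) = mul (mul x y) z) /\
  (forall x, mul one x = x) /\
  (forall x, mul x one = x) /\
  (forall x, scale 1 x = x) /\
  (forall a b x, scale a (scale b x) = scale (a * b) x) /\
  (forall a x y, scale a (mul x y) = mul (scale a x) y
                 /\ scale a (mul x y) = mul x (scale a y)).

Definition qs_basis (n : nat) (e : 'I_n -> Q) : Prop :=
  (forall i, invertible mul one (e i)) /\
  forall x : Q, exists! p : K * ('I_n -> int),
      x = scale p.1 (zprod mul one e p.2).

Definition quantity_space : Prop :=
  [/\ scalable_monoid,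
      (forall x y, mul x y = mul y x)
    & exists n (e : 'I_n -> Q), qs_basis e].

Definition qsim (x y : Q) : Prop := exists a b : K, scale a x = scale b y.

Definition qclass_pred (x : Q) : Q -> Prop := qsim x.

Definition qclasses := {C : Q -> Prop | exists x, C = qclass_pred x}.

Definition qclass (x : Q) : qclasses :=
  exist (fun C => exists y, C = qclass_pred y) (qclass_pred x) (ex_intro _ x erefl).

Definition qrep (C : qclasses) : Q :=
  proj1_sig (constructive_indefinite_description _ (proj2_sig C)).

Definition qclass_mul (C D : qclasses) : qclasses :=
  qclass (mul (qrep C) (qrep D)).

Definition qclass_one : qclasses := qclass one.
End Quantity.

Arguments qclass_mul {K Q} mul scale C D.
Arguments qclass_one {K Q} one scale.

From HB Require Import structures.
From mathcomp Require Import all_boot all_order all_algebra.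
From Stdlib Require Import ClassicalEpsilon ProofIrrelevance.
From Stdlib Require Import FunctionalExtensionality PropExtensionality.
Set Implicit Arguments. Unset Strict Implicit. Unset Printing Implicit Defensive.

Import GRing.Theory.
Local Open Scope ring_scope.

(* The class map x |-> [x] is a monoid morphism onto Q/~, so it sends the
   expansion prod e_i^k_i of a quantity to prod [e_i]^k_i; hence every class
   has such an expansion.  Conversely, prod e_i^k_i ~ prod e_i^l_i means
   a.prod e_i^k_i = b.prod e_i^l_i, and uniqueness of expansions in Q forces
   k = l.  Applied to the exponent vectors of single basis elements this also
   shows that i |-> [e_i] is injective. *)

Section Monoid.
Variables (M : Type) (mul : M -> M -> M) (one : M).

Lemma minv_spec x : invertible mul one x ->
  mul x (minv mul one x) = one /\ mul (minv mul one x) x = one.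
Proof. exact: (epsilon_spec (inhabits x) (fun y => _)). Qed.

Hypothesis mulmA : associative mul.
Hypothesis mul1m : left_id one mul.
Hypothesis mulm1 : right_id one mul.

Lemma minv_eq x y : mul x y = one -> mul y x = one -> minv mul one x = y.
Proof.
move=> xy1 yx1; have [xx'1 _] := minv_spec (ex_intro _ y (conj xy1 yx1)).
by rewrite -[y]mulm1 -[in RHS]xx'1 mulmA yx1 mul1m.
Qed.

HB.instance Definition _ := Monoid.isLaw.Build M one mul mulmA mul1m mulm1.

Lemma zprod_delta n (x : 'I_n -> M) i :
  zprod mul one x (fun j => (j == i)%:Z) = x i.
Proof.
rewrite /zprod (eq_bigr (fun j => if j == i then zpow mul one (x j) 1 else one)).
  by rewrite -big_mkcond big_pred1_eq /= mulm1.
by move=> j _; case: eqP.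
Qed.
End Monoid.

Section Morphism.
Variables (M : Type) (mulM : M -> M -> M) (oneM : M).
Variables (N : Type) (mulN : N -> N -> N) (oneN : N).
Variable f : M -> N.
Hypothesis fM : forall x y, f (mulM x y) = mulN (f x) (f y).
Hypothesis f1 : f oneM = oneN.

Lemma morph_iter x m : f (iter m (mulM x) oneM) = iter m (mulN (f x)) oneN.
Proof. by elim: m => [|m IHm] //=; rewrite fM IHm. Qed.

Hypothesis mulNA : associative mulN.
Hypothesis mul1N : left_id oneN mulN.
Hypothesis mulN1 : right_id oneN mulN.

Lemma morph_minv x : invertible mulM oneM x ->
  f (minv mulM oneM x) = minv mulN oneN (f x).
Proof.
move=> x_inv; have [xx'1 x'x1] := minv_spec x_inv.
by symmetry; apply: minv_eq => //; rewrite -fM ?xx'1 ?x'x1 f1.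
Qed.

Lemma morph_zpow x k : invertible mulM oneM x ->
  f (zpow mulM oneM x k) = zpow mulN oneN (f x) k.
Proof. by move=> x_inv; case: k => m; rewrite /zpow morph_iter ?morph_minv. Qed.

Lemma morph_zprod n (x : 'I_n -> M) k :
    (forall i, invertible mulM oneM (x i)) ->
  f (zprod mulM oneM x k) = zprod mulN oneN (fun i => f (x i)) k.
Proof.
move=> x_inv; rewrite /zprod (big_morph f fM f1).
by apply: eq_bigr => i _; apply: morph_zpow.
Qed.
End Morphism.

Section QuantityQuotient.
Variables (K : fieldType) (Q : Type) (mul : Q -> Q -> Q) (one : Q)
          (scale : K -> Q -> Q).
Hypothesis mulmA : associative mul.
Hypothesis mul1m : left_id one mul.
Hypothesis mulm1 : right_id one mul.
Hypothesis scale1 : forall x, scale 1 x = x.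
Hypothesis scaleA : forall a b x, scale a (scale b x) = scale (a * b) x.
Hypothesis scaleMl : forall a x y, scale a (mul x y) = mul (scale a x) y.
Hypothesis scaleMr : forall a x y, scale a (mul x y) = mul x (scale a y).

Local Notation qsim := (qsim scale).
Local Notation qclass := (qclass scale).
Local Notation qclass_mul := (qclass_mul mul scale).
Local Notation qclass_one := (qclass_one one scale).

Lemma qsim_refl x : qsim x x.
Proof. by exists 1, 1. Qed.

Lemma qsim_sym x y : qsim x y -> qsim y x.
Proof. by case=> a [b eq_ab]; exists b, a. Qed.

Lemma qsim_trans x y z : qsim x y -> qsim y z -> qsim x z.
Proof.
case=> a [b xy] [c [d yz]]; exists (c * a), (b * d).
by rewrite -scaleA xy scaleA mulrC -[in LHS]scaleA yz scaleA.
Qed.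

Lemma qsim_mul x x' y y' : qsim x x' -> qsim y y' -> qsim (mul x y) (mul x' y').
Proof.
case=> a [b xx'] [c [d yy']]; exists (a * c), (b * d).
by rewrite -!scaleA scaleMr scaleMl yy' xx' -scaleMl -scaleMr.
Qed.

Lemma qclassP x y : qclass x = qclass y <-> qsim x y.
Proof.
split=> [/(congr1 (@proj1_sig _ _)) /= eq_xy | xy].
  by rewrite /qclass_pred in eq_xy; rewrite eq_xy; apply: qsim_refl.
apply: eq_sig_hprop => [C p q|/=]; first exact: proof_irrelevance.
apply: functional_extensionality => z; apply: propositional_extensionality.
by split; [apply: qsim_trans (qsim_sym xy) | apply: qsim_trans xy].
Qed.

Lemma qrepK C : qclass (qrep C) = C.
Proof.
apply: eq_sig_hprop => [D p q|]; first exact: proof_irrelevance.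
exact/esym/(proj2_sig (constructive_indefinite_description _ (proj2_sig C))).
Qed.

Lemma qclass_mulE x y : qclass_mul (qclass x) (qclass y) = qclass (mul x y).
Proof. by apply/qclassP; apply: qsim_mul; apply/qclassP; rewrite qrepK. Qed.

Lemma qclass_mulA : associative qclass_mul.
Proof.
by move=> C D E; rewrite -[C]qrepK -[D]qrepK -[E]qrepK !qclass_mulE mulmA.
Qed.

Lemma qclass_mul1 : left_id qclass_one qclass_mul.
Proof. by move=> C; rewrite -[C]qrepK qclass_mulE mul1m. Qed.

Lemma qclass_mulr1 : right_id qclass_one qclass_mul.
Proof. by move=> C; rewrite -[C]qrepK qclass_mulE mulm1. Qed.

Variables (n : nat) (e : 'I_n -> Q).
Hypothesis e_basis : qs_basis mul one scale e.

Lemma qclass_zprod k :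
  zprod qclass_mul qclass_one (fun i => qclass (e i)) k
  = qclass (zprod mul one e k).
Proof.
symmetry; apply: morph_zprod (proj1 e_basis) => //.
- by move=> x y; rewrite qclass_mulE.
- exact: qclass_mulA.
- exact: qclass_mul1.
- exact: qclass_mulr1.
Qed.

Lemma qsim_zprod x : exists k, qsim x (zprod mul one e k).
Proof.
have [[mu k] [/= x_eq _]] := proj2 e_basis x.
by exists k, 1, mu; rewrite scale1.
Qed.

Lemma qsim_zprod_inj k l :
  qsim (zprod mul one e k) (zprod mul one e l) -> k = l.
Proof.
case=> a [b kl]; have [p [_ p_uniq]] := proj2 e_basis (scale a (zprod mul one e k)).
exact: (congr1 snd (etrans (esym (p_uniq (a, k) erefl)) (p_uniq (b, l) kl))).
Qed.

Lemma qclass_group_basis :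
  group_basis qclass_mul qclass_one (fun i => qclass (e i)).
Proof.
move=> g; have [k gk] := qsim_zprod (qrep g).
exists k; split; first by rewrite qclass_zprod -[g in g = _]qrepK; apply/qclassP.
move=> l; rewrite qclass_zprod -[g]qrepK => /qclassP gl.
exact/qsim_zprod_inj/(qsim_trans (qsim_sym gk) gl).
Qed.

Lemma qclass_basis_inj : injective (fun i => qclass (e i)).
Proof.
move=> i j /qclassP; rewrite -(zprod_delta mulmA mul1m mulm1 e i).
rewrite -(zprod_delta mulmA mul1m mulm1 e j) => /qsim_zprod_inj /(congr1 (@^~ i)).
by rewrite eqxx; case: eqP.
Qed.
End QuantityQuotient.

Theorem proposition3p19 (K : fieldType) (Q : Type) (mul : Q -> Q -> Q)
    (one : Q) (scale : K -> Q -> Q)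
    (HQ : quantity_space mul one scale)
    (n : nat) (e : 'I_n -> Q) (He : qs_basis mul one scale e) :
  group_basis (qclass_mul mul scale) (qclass_one one scale)
              (fun i => qclass scale (e i))
  /\ injective (fun i => qclass scale (e i)).
Proof.
case: HQ => [[mulmA [mul1m [mulm1 [scale1 [scaleA scaleM]]]]] _ _].
have scaleMl a x y := (scaleM a x y).1.
have scaleMr a x y := (scaleM a x y).2.
split; first exact: qclass_group_basis.
exact: qclass_basis_inj.
Qed.
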